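(* Let $p$ be a prime and let $\Gamma = \bigoplus_{i \in B_1} \mathbb{Q} \oplus \bigoplus_{i \in B_2} \mathcal{C}(p^\infty)$ for index sets $B_1, B_2$, regarded as a discrete abelian group. If $E \subset \Gamma$ is $p$-PR, then $|E| \le |B_1| + |B_2|$.
   Context: $\mathcal{C}(p^\infty)$ denotes the group of all $p^m$-th roots of unity, $m \ge 1$. For a discrete abelian group $\Delta$ with compact dual $\widehat{\Delta}$ and $N \in \mathbb{N}$, a subset $E \subset \Delta$ is $N$-PR if for every function $\varphi: E \to \mathbb{Z}_N$ (the $N$-th roots of unity in the unit circle) there exists $x \in \widehat{\Delta}$ with $\varphi(\gamma) = \gamma(x)$ for all $\gamma \in E$. *)

From HB Require Import structures.
From mathcomp Require Import all_boot all_order all_algebra.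
From mathcomp Require Import complex.
From mathcomp Require Import all_classical all_reals.
Set Implicit Arguments. Unset Strict Implicit. Unset Printing Implicit Defensive.
Import Order.TTheory GRing.Theory Num.Theory.
Local Open Scope ring_scope.
Local Open Scope classical_set_scope.
Local Open Scope complex_scope.

(* The unit circle is modelled inside R[i] (complex numbers over a realType R).
   Gamma = (+)_{B1} Q (+) (+)_{B2} C(p^oo) is modelled as the set of pairs
   (f, g) with f : B1 -> rat finitely supported, g : B2 -> R[i] with each g b a
   p^m-th root of unity and g b = 1 for all but finitely many b. *)

Definition Gcar (R : realType) (B1 B2 : Type) : Type :=
  ((B1 -> rat) * (B2 -> R[i]))%type.

Definition in_Cpinf (R : realType) (p : nat) (z : R[i]) : Prop :=
  exists m : nat, (1 <= m)%N /\ z ^+ (p ^ m) = 1.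

Definition in_Gamma (R : realType) (p : nat) (B1 B2 : Type)
  (x : Gcar R B1 B2) : Prop :=
  [/\ finite_set [set b | x.1 b != 0],
      finite_set [set b | x.2 b != 1] &
      forall b, in_Cpinf p (x.2 b)].

Definition Gop (R : realType) (B1 B2 : Type) (x y : Gcar R B1 B2)
  : Gcar R B1 B2 :=
  (fun b => x.1 b + y.1 b, fun b => x.2 b * y.2 b).

Definition is_character (R : realType) (p : nat) (B1 B2 : Type)
  (chi : Gcar R B1 B2 -> R[i]) : Prop :=
  (forall x, in_Gamma p x -> `|chi x| = 1) /\
  (forall x y, in_Gamma p x -> in_Gamma p y ->
     chi (Gop x y) = chi x * chi y).

Definition N_PR (R : realType) (p : nat) (B1 B2 : Type) (N : nat)
  (E : set (Gcar R B1 B2)) : Prop :=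
  forall phi : Gcar R B1 B2 -> R[i],
    (forall g, E g -> phi g ^+ N = 1) ->
    exists chi, is_character p chi /\ forall g, E g -> phi g = chi g.

Arguments in_Gamma {R} p {B1 B2} x.
Arguments is_character {R} p {B1 B2} chi.
Arguments N_PR {R} p {B1 B2} N E.

From HB Require Import structures.
From mathcomp Require Import all_boot all_order all_algebra.
From mathcomp Require Import complex.
From mathcomp Require Import all_classical all_reals.
From mathcomp Require Import finmap sequences exp zify ring.
Import Order.TTheory GRing.Theory Num.Theory.
Set Implicit Arguments. Unset Strict Implicit. Unset Printing Implicit Defensive.
Local Open Scope classical_set_scope.
Local Open Scope card_scope.
Local Open Scope ring_scope.

(* A p-PR set E is p-independent: if an integer relation sum_x a_x x = 0 holds
   among elements of E, the character sending one x to a primitive p-th root of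
   unity and all others to 1 shows that p divides a_x.  Write Gamma
   multiplicatively inside C^x, embedding Q by q |-> exp q.  In each coordinate
   group (Q or C(p^oo)) finitely many elements can all be rewritten as multiples
   of one of them, with coefficients prime to p; eliminating the coordinates
   one at a time shows that n p-independent elements supported on k
   coordinates satisfy n <= k.  Hence the finite supports of the elements of E
   satisfy Hall's condition, and Hall's theorem for families of finite sets
   (proved with Zorn's lemma by shrinking the sets while keeping Hall's
   condition) gives an injection E -> B1 + B2. *)

Section Hall.
Local Open Scope fset_scope.
Variables (X T : choiceType) (E : set X).

Definition fcover (S : X -> {fset T}) (F : {fset X}) : {fset T} :=
  \bigcup_(x <- F) S x.

Definition hall_condition (S : X -> {fset T}) : Prop :=
  forall F : {fset X}, (forall x, x \in F -> E x) -> (#|` F| <= #|` fcover S F|)%N.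

Lemma fcoverP S F y : reflect (exists2 x, x \in F & y \in S x) (y \in fcover S F).
Proof.
apply: (iffP (@bigfcupP _ _ _ y S xpredT)) => [[x /andP[xF _] yS]|[x xF yS]];
  by exists x; rewrite ?xF.
Qed.

Lemma fcoverS S S' F : (forall x, x \in F -> S x `<=` S' x) ->
  fcover S F `<=` fcover S' F.
Proof.
move=> SS'; apply/fsubsetP => y /fcoverP[x xF yS]; apply/fcoverP; exists x => //.
exact: (fsubsetP (SS' x xF)).
Qed.

Lemma fcover1 S x : fcover S [fset x] = S x.
Proof.
apply/fsetP => y; apply/fcoverP/idP => [[z /fset1P -> //]|].
by exists x; rewrite ?fset11.
Qed.

Definition shrink (S : X -> {fset T}) x a : X -> {fset T} :=
  fun z => if z == x then S x `\ a else S z.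

Section MinimalHall.
Variable M : X -> {fset T}.
Hypothesis hallM : hall_condition M.

Lemma hall_critical x a : ~ hall_condition (shrink M x a) ->
  exists P : {fset X}, [/\ forall z, z \in P -> E z, x \notin P &
    (#|` fcover M P `|` (M x `\ a)| <= #|` P|)%N].
Proof.
move=> /existsNP[F /not_implyP[FE /negP]]; rewrite -ltnNge => ltF.
have xF : x \in F.
  apply/negPn/negP => xF; move: (hallM FE); apply/negP; rewrite -ltnNge.
  apply: leq_ltn_trans ltF; apply/fsubset_leq_card/fcoverS => z zF.
  by rewrite /shrink; case: eqP => [zx|_ //]; move: xF; rewrite -zx zF.
exists (F `\ x); split; first by move=> z /fsetD1P[_ /FE].
  by rewrite fsetD11.
have : (#|` fcover M (F `\ x) `|` (M x `\ a)| <= #|` fcover (shrink M x a) F|)%N.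
  apply/fsubset_leq_card/fsubsetP => y /fsetUP[/fcoverP[z /fsetD1P[zx zF] yz]|yx].
    by apply/fcoverP; exists z; rewrite // /shrink (negPf zx).
  by apply/fcoverP; exists x; rewrite // /shrink eqxx.
by move: ltF; rewrite (cardfsD1 x F) xF; lia.
Qed.

Hypothesis minM : forall x a, a \in M x -> ~ hall_condition (shrink M x a).

Lemma minimal_hall_card1 x : E x -> #|` M x| = 1%N.
Proof.
move=> Ex; apply/eqP; rewrite eqn_leq andbC.
have -> : (0 < #|` M x|)%N.
  by rewrite -fcover1 -(cardfs1 x) hallM // => z /fset1P ->.
(* Critical sets P, Q for two distinct a, b in M x would violate Hall's
   condition on x |` (P `|` Q) or on P `&` Q, by submodularity of the cardinal. *)
rewrite leqNgt; apply/negP => gt1.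
have [a aM] : exists a, a \in M x.
  by apply/fset0Pn; rewrite -cardfs_gt0 ltnW.
have [b /fsetD1P[ba bM]] : exists b, b \in M x `\ a.
  by apply/fset0Pn; rewrite -cardfs_gt0; move: gt1; rewrite (cardfsD1 a) aM.
have [P [PE xP leP]] := hall_critical (minM aM).
have [Q [QE xQ leQ]] := hall_critical (minM bM).
set A := fcover M P `|` (M x `\ a) in leP.
set B := fcover M Q `|` (M x `\ b) in leQ.
have leU : (#|` x |` (P `|` Q)| <= #|` A `|` B|)%N.
  apply: leq_trans (hallM _) _; first by move=> z /fset1UP[->|/fsetUP[/PE|/QE]].
  apply/fsubset_leq_card/fsubsetP => y /fcoverP[z /fset1UP[->|/fsetUP[zP|zQ]] yz].
  - have [->|ya] := eqVneq y a; last by rewrite !inE ya yz !orbT.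
    by rewrite !inE eq_sym ba aM !orbT.
  - by rewrite !inE; apply/orP; left; apply/orP; left; apply/fcoverP; exists z.
  - by rewrite !inE; apply/orP; right; apply/orP; left; apply/fcoverP; exists z.
have leI : (#|` P `&` Q| <= #|` A `&` B|)%N.
  apply: leq_trans (hallM _) _; first by move=> z /fsetIP[/PE].
  apply/fsubset_leq_card/fsubsetP => y /fcoverP[z /fsetIP[zP zQ] yz].
  by rewrite !inE; apply/andP; split; apply/orP; left; apply/fcoverP; exists z.
move: leU; rewrite cardfsU1 !inE negb_or xP xQ /= => leU.
by have := cardfsUI A B; have := cardfsUI P Q; lia.
Qed.

Lemma minimal_hall_sdr (t0 : T) :
  exists f : X -> T, {in E &, injective f} /\ forall x, E x -> M x = [fset f x].
Proof.
have [f Mf] : {f : X -> T & forall x, E x -> M x = [fset f x]}.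
  apply: (@choice _ _ (fun x y => E x -> M x = [fset y])) => x.
  have [/minimal_hall_card1/eqP/cardfs1P[y ->]|nEx] := pselect (E x).
    by exists y.
  by exists t0 => /nEx.
exists f; split=> // x x' /set_mem Ex /set_mem Ex' fxx'.
apply/eqP/negPn/negP => neq.
have : (#|` [fset x; x']| <= #|` fcover M [fset x; x']|)%N.
  by apply: hallM => z /fset2P[]->.
apply/negP; rewrite -ltnNge cardfs2 neq /= ltnS -(cardfs1 (f x)).
apply/fsubset_leq_card/fsubsetP => y /fcoverP[z /fset2P[]->].
all: by rewrite Mf // fxx'.
Qed.

End MinimalHall.

Variable S : X -> {fset T}.
Hypothesis hallS : hall_condition S.

Definition hall_refinement :=
  {M : X -> {fset T} | (forall x, M x `<=` S x) /\ hall_condition M}.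

Definition refined_by (M1 M2 : hall_refinement) : bool :=
  `[< forall x, sval M2 x `<=` sval M1 x >].

Let top : hall_refinement := exist _ S (conj (fun x => fsubset_refl (S x)) hallS).

Lemma chain_avoid (A : set hall_refinement) : total_on A refined_by ->
  forall L : seq (X * T),
  (forall xy, xy \in L -> exists2 M, A M & xy.2 \notin sval M xy.1) ->
  exists2 M, M = top \/ A M & forall xy, xy \in L -> xy.2 \notin sval M xy.1.
Proof.
move=> Atot; elim=> [|[x y] L IHL] Lavoid; first by exists top; [left|].
have [M1 AM1 yM1] := Lavoid (x, y) (mem_head _ _).
have [M0 M0A LM0] : exists2 M, M = top \/ A M &
    forall xy, xy \in L -> xy.2 \notin sval M xy.1.
  by apply: IHL => xy xyL; apply: Lavoid; rewrite in_cons xyL orbT.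
have finer_avoids (N N' : hall_refinement) xy :
    refined_by N N' -> xy.2 \notin sval N xy.1 -> xy.2 \notin sval N' xy.1.
  by move=> /asboolP NN'; apply: contra; apply: (fsubsetP (NN' _)).
have [M1finer|M0finer] : refined_by M0 M1 \/ refined_by M1 M0.
- case: M0A => [->|AM0]; last exact: Atot.
  by left; apply/asboolP => z; exact: (proj2_sig M1).1.
- exists M1; first by right.
  by move=> xy; rewrite in_cons => /predU1P[->//|/LM0]; apply: finer_avoids.
- exists M0 => // xy; rewrite in_cons => /predU1P[->|/LM0//].
  exact: finer_avoids M0finer yM1.
Qed.

Lemma chain_lower_bound (A : set hall_refinement) : total_on A refined_by ->
  exists M0 : hall_refinement, forall M, A M -> refined_by M M0.
Proof.
move=> Atot.
pose meet x := [fset y in S x | `[< forall M, A M -> y \in sval M x >]].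
suff hall_meet : hall_condition meet.
  exists (exist _ meet (conj (fun x => fset_sub _ _) hall_meet)) => M AM.
  apply/asboolP => x; apply/fsubsetP => y.
  by move=> /imfsetP[z /andP[_ /asboolP]] /= + ->; apply.
(* Only finitely many pairs (x, y) with x in F matter, and a single member of
   the chain excludes all those that the meet excludes. *)
move=> F FE.
pose L := [seq xy <- [seq (x, y) | x <- F, y <- S x] | xy.2 \notin meet xy.1].
have [M _ LM] : exists2 M, M = top \/ A M &
    forall xy, xy \in L -> xy.2 \notin sval M xy.1.
  apply: chain_avoid => // -[x y].
  rewrite mem_filter /= => /andP[+ /allpairsPdep[x' [y' [_ yS [ex ey]]]]].
  subst x' y'; rewrite !inE yS => /asboolPn/existsNP[M /not_implyP[AM /negP yM]].
  by exists M.
have [MS hallM] := proj2_sig M.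
apply: leq_trans (hallM F FE) _; apply/fsubset_leq_card/fcoverS => x xF.
apply/fsubsetP => y yM; apply: contraT => ymeet.
have /LM : (x, y) \in L.
  rewrite mem_filter ymeet; apply/allpairsPdep.
  by exists x, y; rewrite xF (fsubsetP (MS x)).
by rewrite yM.
Qed.

Lemma hall_minimal_refinement :
  exists M : hall_refinement, forall M', refined_by M M' -> M' = M.
Proof.
apply: Zorn; last exact: chain_lower_bound.
- by move=> M; apply/asboolP => x; exact: fsubset_refl.
- move=> M1 M2 M3 /asboolP M12 /asboolP M23; apply/asboolP => x.
  exact: fsubset_trans (M23 x) (M12 x).
- move=> [M hM] [M' hM'] /asboolP /= M'M /asboolP /= MM'.
  have eqM : M = M' by apply: funext => x; apply/eqP; rewrite eqEfsubset M'M MM'.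
  by subst M'; congr exist; apply: Prop_irrelevance.
Qed.

Theorem hall_sdr (t0 : T) :
  exists f : X -> T, {in E &, injective f} /\ forall x, E x -> f x \in S x.
Proof.
have [[M [MS hallM]] Mmin] := hall_minimal_refinement.
have minM x a : a \in M x -> ~ hall_condition (shrink M x a).
  move=> aM hall'.
  have shrinkS z : shrink M x a z `<=` S z.
    rewrite /shrink; case: eqP => [->|_] //.
    exact: fsubset_trans (fsubsetDl _ _) (MS x).
  have shrinkM :
      refined_by (exist _ M (conj MS hallM)) (exist _ _ (conj shrinkS hall')).
    apply/asboolP => z; rewrite /shrink /=.
    by case: eqP => [->|_]; [exact: fsubsetDl|exact: fsubset_refl].
  have := congr1 (fun N : hall_refinement => a \in sval N x) (Mmin _ shrinkM).
  by rewrite /= /shrink eqxx !inE eqxx aM.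
have [f [finj Mf]] := minimal_hall_sdr hallM minM t0.
by exists f; split=> // x Ex; apply: (fsubsetP (MS x)); rewrite Mf // fset11.
Qed.

End Hall.

Section PIndependence.
Variables (F : fieldType) (p : nat).
Hypothesis p_prime : prime p.

Definition p_eliminable (Q : F -> Prop) : Prop :=
  forall n (w : 'I_n.+1 -> F), (forall i, Q (w i)) ->
  exists i0 (d e : 'I_n.+1 -> int),
    (forall i, ~~ (p%:Z %| d i)%Z) /\ forall i, w i ^ d i * w i0 ^ e i = 1.

Definition p_independent (C : Type) n (v : 'I_n -> C -> F) : Prop :=
  forall a : 'I_n -> int, (forall c, \prod_i v i c ^ a i = 1) ->
  forall i, (p%:Z %| a i)%Z.

Lemma prime_ndvdz1 : ~~ (p%:Z %| 1)%Z.
Proof. by rewrite dvdzE /= dvdn1 neq_ltn prime_gt1 ?orbT. Qed.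

Variables (C : eqType) (P : C -> F -> Prop).
Hypothesis P_neq0 : forall c z, P c z -> z != 0.
Hypothesis P_lincomb : forall c z w (d e : int), P c z -> P c w -> P c (z ^ d * w ^ e).
Hypothesis P_elim : forall c, p_eliminable (P c).

Lemma p_independent_card_le (U : seq C) n (v : 'I_n -> C -> F) :
  (forall i c, c \notin U -> v i c = 1) -> (forall i c, P c (v i c)) ->
  p_independent v -> (n <= size U)%N.
Proof.
elim: U n v => [|c U IHU] [|m] v vU vP indv //=.
  have := indv (fun=> 1) _ ord0; rewrite (negPf prime_ndvdz1); apply=> c.
  by apply: big1 => i _; rewrite vU // expr1z.
have [i0 [d [e [d_ndvd elim_c]]]] := P_elim (fun i => vP i c).
(* Eliminate c: every w j is 1 at c, and the w j stay p-independent since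
   every d i is prime to p. *)
pose w j c' := v (lift i0 j) c' ^ d (lift i0 j) * v i0 c' ^ e (lift i0 j).
rewrite ltnS; apply: (IHU m w) => [j c' c'U|j c'|a rel_a k].
- have [->|c'c] := eqVneq c' c; first exact: elim_c.
  by rewrite /w !vU ?inE ?negb_or ?c'c ?exp1rz ?mulr1.
- exact: P_lincomb.
pose a' i := if unlift i0 i is Some j then a j * d i
  else \sum_(j < m) a j * e (lift i0 j).
suff rel_a' c' : \prod_i v i c' ^ a' i = 1.
  have := indv a' rel_a' (lift i0 k); rewrite /a' liftK Gauss_dvdzl //.
  by rewrite coprimezE prime_coprime // -dvdzE.
have vi0_neq0 : v i0 c' != 0 := P_neq0 (vP i0 c').
rewrite (bigD1_ord i0) //= /a' unlift_none -[RHS](rel_a c') /w.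
under eq_bigr => j _ do rewrite liftK.
under [RHS]eq_bigr => j _ do rewrite expfzMl !exprz_exp.
rewrite big_split /= mulrC.
rewrite -(big_morph _ (fun m n => expfzDr m n vi0_neq0) (expr0z _)).
by congr (_ * _ ^ _); apply: eq_bigr => j _; rewrite mulrC.
Qed.

End PIndependence.

Section PElimination.
Variable p : nat.
Hypothesis p_prime : prime p.

Lemma root_pexp_neq0 (F : nzRingType) (z : F) m : z ^+ (p ^ m) = 1 -> z != 0.
Proof.
apply: contra_eqN => /eqP ->.
by rewrite expr0n gtn_eqF ?expn_gt0 ?prime_gt0 // eq_sym oner_eq0.
Qed.

Lemma int_p_elim n (N : 'I_n.+1 -> int) : exists i0 (d e : 'I_n.+1 -> int),
  (forall i, ~~ (p%:Z %| d i)%Z) /\ forall i, N i * d i + N i0 * e i = 0.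
Proof.
have [/existsP[j0 Nj0]|/existsPn N0] := boolP [exists j, N j != 0]; last first.
  exists ord0, (fun=> 1), (fun=> 0); split=> i; first exact: prime_ndvdz1.
  by move/negbNE/eqP: (N0 i) ->; rewrite mul0r mulr0 addr0.
have [i0 Ni0 minv] :=
  @arg_minnP _ j0 (fun i => N i != 0) (fun i => logn p `|N i|) Nj0.
set k := logn p `|N i0|.
have pk_dvd i : ((p ^ k)%:Z %| N i)%Z.
  have [->|Ni] := eqVneq (N i) 0; first exact: dvdz0.
  by rewrite dvdzE /= pfactor_dvdn ?absz_gt0 // minv.
exists i0, (fun=> (N i0 %/ (p ^ k)%:Z)%Z), (fun i => - (N i %/ (p ^ k)%:Z)%Z).
split=> i; last by rewrite -{2}(divzK (pk_dvd i0)) -{1}(divzK (pk_dvd i)); ring.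
apply/negP => p_dvd.
have : ((p ^ k.+1)%:Z %| N i0)%Z.
  by rewrite -(divzK (pk_dvd i0)) expnS PoszM dvdz_mul.
by rewrite dvdzE /= pfactor_dvdn ?absz_gt0 // ltnn.
Qed.

Lemma rat_p_elim n (q : 'I_n.+1 -> rat) : exists i0 (d e : 'I_n.+1 -> int),
  (forall i, ~~ (p%:Z %| d i)%Z) /\ forall i, q i *~ d i + q i0 *~ e i = 0.
Proof.
pose D := \prod_(j < n.+1) denq (q j).
pose N i := numq (q i) * \prod_(j < n.+1 | j != i) denq (q j).
have NE i : (N i)%:~R = q i * D%:~R :> rat.
  by rewrite /N /D [in RHS](bigD1 i) //= !intrM numqE mulrA.
have D_neq0 : D%:~R != 0 :> rat.
  by rewrite intr_eq0 lt0r_neq0 // prodr_gt0 // => j _; exact: denq_gt0.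
have [i0 [d [e [d_ndvd elim_N]]]] := int_p_elim N.
exists i0, d, e; split=> // i; apply: (mulIf D_neq0).
have := congr1 (fun z : int => z%:~R : rat) (elim_N i).
rewrite /= intrD (intrM _ (N i)) (intrM _ (N i0)) !NE mul0r mulr0z => <-.
by rewrite !mulrzr; ring.
Qed.

Lemma root_p_elim (F : fieldType) :
  p_eliminable p (fun z : F => exists m, z ^+ (p ^ m) = 1).
Proof.
move=> n z z_root.
have z_root' i : exists m, z i ^+ (p ^ m) == 1.
  by have [m zm] := z_root i; exists m; apply/eqP.
pose k i := ex_minn (z_root' i).
have kP i : z i ^+ (p ^ k i) = 1 by rewrite /k; case: ex_minnP => m /eqP.
have kmin i m : z i ^+ (p ^ m) = 1 -> (k i <= m)%N.
  by rewrite /k; case: ex_minnP => m' _ minm /eqP /minm.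
have [i0 _ kmax] := @arg_maxnP _ ord0 xpredT k isT.
have pk_gt0 : (0 < p ^ k i0)%N by rewrite expn_gt0 prime_gt0.
have [r prim_r r_dvd] := prim_order_exists pk_gt0 (kP i0).
have [j jk rE] := dvdn_pfactor _ _ p_prime r_dvd.
have {jk} jE : j = k i0.
  by apply/eqP; rewrite eqn_leq jk kmin // -rE prim_expr_order.
rewrite rE jE in prim_r.
have zi_pk i : z i ^+ (p ^ k i0) = 1.
  by rewrite -(subnKC (kmax i isT)) expnD exprM kP expr1n.
have [t tE] : {t : 'I_n.+1 -> nat & forall i, z i = z i0 ^+ t i}.
  apply: (@choice _ _ (fun i t => z i = z i0 ^+ t)) => i.
  by have [t ->] := prim_rootP prim_r (zi_pk i); exists t.
have z0_neq0 : z i0 != 0 := root_pexp_neq0 (kP i0).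
exists i0, (fun=> 1), (fun i => - (t i)%:Z); split=> i; first exact: prime_ndvdz1.
by rewrite expr1z -exprnN {1}tE mulfV // expf_neq0.
Qed.

End PElimination.

Lemma prime_root_exists (F : closedFieldType) (p : nat) :
  prime p -> p%:R != 0 :> F -> exists w : F, p.-primitive_root w.
Proof.
move=> p_prime p_neq0; have p_gt1 := prime_gt1 p_prime.
pose P : {poly F} := \poly_(i < p) 1.
have [w /rootP] : exists w, root P w.
  by apply/closed_rootP; rewrite size_poly_eq ?oner_neq0 // neq_ltn p_gt1 orbT.
rewrite horner_poly; under eq_bigr do rewrite mul1r; move=> sum0.
have wp : w ^+ p = 1 by apply/eqP; rewrite -subr_eq0 subrX1 sum0 mulr0.
have w_neq1 : w != 1.
  apply: contra_neq p_neq0 => w1; rewrite -sum0 w1.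
  by under eq_bigr do rewrite expr1n; rewrite sumr_const card_ord.
have [m prim_w m_dvd] := prim_order_exists (prime_gt0 p_prime) wp.
have [_ /(_ m m_dvd)/orP[/eqP m1|/eqP mp]] := primeP p_prime.
  by move: (prim_expr_order prim_w); rewrite m1 expr1 => /eqP; rewrite (negPf w_neq1).
by exists w; rewrite -mp.
Qed.

Section RationalExponential.
Local Open Scope complex_scope.
Variable R : realType.

Definition expq (q : rat) : R[i] := (expR (ratr q : R))%:C.

Lemma expq0 : expq 0 = 1.
Proof. by rewrite /expq rmorph0 expR0. Qed.

Lemma expqD q r : expq (q + r) = expq q * expq r.
Proof. by rewrite /expq rmorphD expRD rmorphM. Qed.

Lemma expq_neq0 q : expq q != 0.
Proof. by rewrite /expq fmorph_eq0 gt_eqF ?expR_gt0. Qed.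

Lemma expq_inj : injective expq.
Proof.
move=> q r /eqP; rewrite /expq (inj_eq (@complexI _)) (inj_eq (@expR_inj R)).
by rewrite (inj_eq (fmorph_inj _)) => /eqP.
Qed.

Lemma expq_eq1 q : (expq q == 1) = (q == 0).
Proof. by rewrite -expq0 (inj_eq expq_inj). Qed.

Lemma expqMz q (d : int) : expq (q *~ d) = expq q ^ d.
Proof.
have expqMn n : expq (q *+ n) = expq q ^+ n.
  by rewrite /expq rmorphMn -mulr_natl expRM_natl rmorphXn.
case: d => n; first exact: expqMn.
by rewrite NegzE mulrNz -pmulrn -exprnN -expqMn /expq rmorphN expRN fmorphV.
Qed.

Lemma expq_p_elim p : prime p -> p_eliminable p (fun z => exists q, z = expq q).
Proof.
move=> p_prime n z z_expq.
have [q qE] : {q : 'I_n.+1 -> rat & forall i, z i = expq (q i)}.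
  exact: (@choice _ _ (fun i q => z i = expq q)).
have [i0 [d [e [d_ndvd elim_q]]]] := rat_p_elim p_prime q.
exists i0, d, e; split=> // i.
by rewrite !qE -!expqMz -expqD elim_q expq0.
Qed.

End RationalExponential.

Section Gamma.
Variables (R : realType) (p : nat) (B1 B2 : Type).
Hypothesis p_prime : prime p.
Local Notation G := (Gcar R B1 B2).
Local Notation B := {classic (B1 + B2)}.
Local Notation Gmul := (@Gop R B1 B2).

Definition Gone : G := (fun _ => 0, fun _ => 1).

Definition Gnat_comb n (xs : 'I_n -> G) (k : 'I_n -> nat) : G :=
  \big[Gmul/Gone]_(i < n) \big[Gmul/Gone]_(l < k i) xs i.

Definition coord (x : G) (c : B) : R[i] :=
  match c with inl b => expq R (x.1 b) | inr b => x.2 b end.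

Definition coord_pred (c : B) (z : R[i]) : Prop :=
  match c with
  | inl _ => exists q, z = expq R q
  | inr _ => exists m, z ^+ (p ^ m) = 1
  end.

Definition support (x : G) : {fset B} := fset_set [set c | coord x c != 1].

Lemma coord_Gop x y c : coord (Gmul x y) c = coord x c * coord y c.
Proof. by case: c => b //=; rewrite expqD. Qed.

Lemma coord_Gone c : coord Gone c = 1.
Proof. by case: c => b //=; rewrite expq0. Qed.

Lemma coord_big I (r : seq I) (f : I -> G) c :
  coord (\big[Gmul/Gone]_(i <- r) f i) c = \prod_(i <- r) coord (f i) c.
Proof. exact: (big_morph _ (fun x y => coord_Gop x y c) (coord_Gone c)). Qed.

Lemma coord_Gnat_comb n (xs : 'I_n -> G) k c :
  coord (Gnat_comb xs k) c = \prod_(i < n) coord (xs i) c ^+ k i.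
Proof.
by rewrite coord_big; apply: eq_bigr => i _; rewrite coord_big prodr_const card_ord.
Qed.

Lemma coord_inj x y : (forall c, coord x c = coord y c) -> x = y.
Proof.
move=> xy; rewrite [x]surjective_pairing [y]surjective_pairing.
by congr pair; apply: funext => b; [exact: expq_inj (xy (inl b))|exact: xy (inr b)].
Qed.

Lemma coord_pred_neq0 c z : coord_pred c z -> z != 0.
Proof.
by case: c => b /= [m]; [move=> ->; exact: expq_neq0|exact: root_pexp_neq0].
Qed.

Lemma coord_pred_lincomb c z w (d e : int) :
  coord_pred c z -> coord_pred c w -> coord_pred c (z ^ d * w ^ e).
Proof.
case: c => b /= [m zm] [k wk].
  by exists (m *~ d + k *~ e); rewrite zm wk expqD !expqMz.
have rootXz (x : R[i]) (l : int) j : x ^+ (p ^ j) = 1 -> (x ^ l) ^+ (p ^ j) = 1.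
  move=> xj; rewrite -[_ ^+ _]/((x ^ l) ^ (p ^ j)%:Z) exprzAC.
  by rewrite -[x ^ _]/(x ^+ (p ^ j)) xj exp1rz.
exists (m + k)%N; rewrite exprMn expnD exprM rootXz // expr1n mul1r.
by rewrite mulnC exprM rootXz // expr1n.
Qed.

Lemma coord_pred_p_elim c : p_eliminable p (coord_pred c).
Proof. by case: c => b; [exact: expq_p_elim|exact: root_p_elim]. Qed.

Lemma in_Gamma_Gone : in_Gamma p Gone.
Proof.
split=> [||b]; last by exists 1%N; rewrite expr1n.
all: by apply: (@sub_finite_set _ _ set0) => // b /=; rewrite eqxx.
Qed.

Lemma in_Gamma_Gop x y : in_Gamma p x -> in_Gamma p y -> in_Gamma p (Gmul x y).
Proof.
case=> fx1 fx2 cx [fy1 fy2 cy]; split=> /=.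
- apply: (@sub_finite_set _ _ ([set b | x.1 b != 0] `|` [set b | y.1 b != 0])).
    by move=> b /=; have [->|] := eqVneq (x.1 b) 0; [rewrite add0r; right|left].
  by rewrite finite_setU.
- apply: (@sub_finite_set _ _ ([set b | x.2 b != 1] `|` [set b | y.2 b != 1])).
    by move=> b /=; have [->|] := eqVneq (x.2 b) 1; [rewrite mul1r; right|left].
  by rewrite finite_setU.
- move=> b; have [m [m_gt0 xm]] := cx b; have [k [_ yk]] := cy b.
  exists (m + k)%N; split; first by rewrite addn_gt0 m_gt0.
  by rewrite exprMn expnD exprM xm expr1n mulnC exprM yk expr1n mulr1.
Qed.

Lemma in_Gamma_big I (r : seq I) (f : I -> G) :
  (forall i, in_Gamma p (f i)) -> in_Gamma p (\big[Gmul/Gone]_(i <- r) f i).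
Proof.
by move=> fG; elim/big_rec: _ => [|i g _]; [exact: in_Gamma_Gone|exact: in_Gamma_Gop].
Qed.

Lemma character_Gone chi : is_character p chi -> chi Gone = 1.
Proof.
case=> chi_norm chiM.
have chi1_neq0 : chi Gone != 0.
  by rewrite -normr_eq0 (chi_norm _ in_Gamma_Gone) oner_eq0.
apply: (mulfI chi1_neq0).
rewrite mulr1 -(chiM _ _ in_Gamma_Gone in_Gamma_Gone); congr chi.
by rewrite /Gop /=; congr pair; apply: funext => b; rewrite ?addr0 ?mulr1.
Qed.

Lemma character_big chi I (r : seq I) (f : I -> G) :
  is_character p chi -> (forall i, in_Gamma p (f i)) ->
  chi (\big[Gmul/Gone]_(i <- r) f i) = \prod_(i <- r) chi (f i).
Proof.
move=> chi_char fG; elim: r => [|i r IHr]; first by rewrite !big_nil character_Gone.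
by rewrite !big_cons (chi_char.2 _ _ (fG i) (in_Gamma_big _ fG)) IHr.
Qed.

Lemma character_Gnat_comb chi n (xs : 'I_n -> G) k :
  is_character p chi -> (forall i, in_Gamma p (xs i)) ->
  chi (Gnat_comb xs k) = \prod_(i < n) chi (xs i) ^+ k i.
Proof.
move=> chi_char xsG; rewrite character_big // => [|i]; last exact: in_Gamma_big.
by apply: eq_bigr => i _; rewrite character_big // prodr_const card_ord.
Qed.

Lemma coord_neq0 x c : in_Gamma p x -> coord x c != 0.
Proof.
case=> _ _ xroot; case: c => b /=; first exact: expq_neq0.
by have [m [_]] := xroot b; exact: root_pexp_neq0.
Qed.

Lemma coord_predP x c : in_Gamma p x -> coord_pred c (coord x c).
Proof.
by case=> _ _ xroot; case: c => b /=; [exists (x.1 b)|have [m []] := xroot b; exists m].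
Qed.

Lemma support_finite x : in_Gamma p x -> finite_set [set c | coord x c != 1].
Proof.
case=> fin1 fin2 _.
have -> : [set c | coord x c != 1] =
    inl @` [set b | x.1 b != 0] `|` inr @` [set b | x.2 b != 1].
  apply/seteqP; split=> [[b|b] /= xb|c [[b xb <-]|[b xb <-]] //=].
  - by left; exists b; rewrite // -(@expq_eq1 R).
  - by right; exists b.
  - by rewrite expq_eq1.
by rewrite finite_setU; split; apply: finite_image.
Qed.

Lemma coord_notin_support x c : in_Gamma p x -> c \notin support x -> coord x c = 1.
Proof.
move=> xG; rewrite /support in_fset_set; last exact: support_finite.
move=> /negP c_notin; apply/eqP; apply: contra_notT c_notin => c_supp.
exact/mem_set.
Qed.

Lemma p_PR_p_independent (E : set G) : N_PR p p E ->
  forall n (xs : 'I_n -> G), injective xs -> (forall i, E (xs i)) ->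
  (forall i, in_Gamma p (xs i)) -> p_independent p (fun i => coord (xs i)).
Proof.
move=> PR n xs xs_inj xsE xsG a rel_a j.
(* Only combinations with coefficients in nat are formed in Gamma: a = ap - an. *)
have [ap [an aE]] :
    exists ap an : 'I_n -> nat, forall i, a i = (ap i)%:Z - (an i)%:Z.
  exists (fun i => if a i is Posz m then m else 0%N).
  exists (fun i => if a i is Negz m then m.+1 else 0%N).
  by move=> i; case: (a i) => m; rewrite ?NegzE ?subr0 ?sub0r.
have comb_eq : Gnat_comb xs ap = Gnat_comb xs an.
  apply: coord_inj => c; apply: divr1_eq.
  rewrite !coord_Gnat_comb -prodfV -big_split -[RHS](rel_a c) /=.
  by apply: eq_bigr => i _; rewrite aE expfzDr ?coord_neq0 // -exprnN.
have p_neq0 : p%:R != 0 :> R[i] by rewrite pnatr_eq0 -lt0n prime_gt0.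
have [w w_prim] := prime_root_exists p_prime p_neq0.
pose phi (g : G) := if `[< g = xs j >] then w else 1.
have [chi [chi_char chi_phi]] :
    exists chi, is_character p chi /\ forall g, E g -> phi g = chi g.
  apply: PR => g _; rewrite /phi.
  by case: asboolP => _; [exact: prim_expr_order|exact: expr1n].
have chi_xs i : chi (xs i) = if i == j then w else 1.
  rewrite -chi_phi // /phi; case: asboolP => [/xs_inj ->|ij]; first by rewrite eqxx.
  by case: eqP => // eij; case: ij; rewrite eij.
have others k : \prod_(i < n | i != j) chi (xs i) ^+ k i = 1.
  by apply: big1 => i /negPf ij; rewrite chi_xs ij expr1n.
move: (congr1 chi comb_eq); rewrite !character_Gnat_comb //.
rewrite (bigD1 j) // [RHS](bigD1 j) //=.
rewrite !others !mulr1 !chi_xs eqxx => /eqP.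
by rewrite (eq_prim_root_expr w_prim) aE -eqz_mod_dvd !modz_nat eqz_nat.
Qed.

Lemma p_PR_hall_condition (E : set G) : E `<=` in_Gamma p -> N_PR p p E ->
  hall_condition E support.
Proof.
move=> EG PR F FE.
have [->|/fset0Pn[x0 x0F]] := eqVneq F fset0; first by rewrite cardfs0.
pose xs (i : 'I_#|` F|) := nth x0 (enum_fset F) i.
have xsF i : xs i \in F by apply: mem_nth.
have xsG i : in_Gamma p (xs i) := EG _ (FE _ (xsF i)).
apply: (p_independent_card_le p_prime coord_pred_neq0 coord_pred_lincomb
  coord_pred_p_elim (U := enum_fset (fcover support F)) (v := fun i => coord (xs i)))
  => [i c c_notin|i c|].
- apply: coord_notin_support => //; move: c_notin; apply: contra => c_supp.
  by apply/fcoverP; exists (xs i).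
- exact: coord_predP.
apply: (p_PR_p_independent PR) => // [i j /eqP|i]; last exact: FE.
by rewrite nth_uniq ?fset_uniq // => /eqP/ord_inj.
Qed.

End Gamma.

Theorem proposition3p6 (R : realType) (p : nat) (B1 B2 : Type)
  (E : set (Gcar R B1 B2)) :
  prime p ->
  E `<=` in_Gamma p ->
  N_PR p p E ->
  E #<= [set: (B1 + B2)%type].
Proof.
move=> p_prime EG PR.
have [[x0 Ex0]|/forallNP E0] := pselect (exists x, E x); last first.
  by rewrite (_ : E = set0) ?card_ge0 //; apply/seteqP; split=> x // /E0.
have hallE := p_PR_hall_condition p_prime EG PR.
have [c0 _] : exists c0, c0 \in fcover (@support R B1 B2) [fset x0]%fset.
  apply/fset0Pn; rewrite -cardfs_gt0 (leq_trans _ (hallE _ _)) ?cardfs1 //.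
  by move=> x /fset1P ->.
have [f [f_inj _]] := hall_sdr hallE c0.
apply: (card_le_trans (B := f @` E)) (card_leT _).
by have /card_esym/card_eqPle[] := inj_card_eq f_inj.
Qed.
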